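(* Let $A$ be a finite subset of an abelian group. Then $$\mathsf{E}(A+A)\geq |A-A|^{-1}\,|A\times A+\Delta(A)|^2\geq |A|^2\max\{|A-A|,|A+A|\},$$ $$\mathsf{E}(A-A)\geq |A-A|^{-1}\,|A\times A-\Delta(A)|^2\geq |A|^2|A-A|,$$ and $$\mathsf{E}(A\pm A)\geq \frac{|A|^{12}}{\mathsf{E}_3(A)^2\,|A-A|},$$ the last inequality holding both for $A+A$ and for $A-A$.
   Context: For a finite set $X$ in an abelian group (written additively), $\mathsf{E}(X)$ is the additive energy, the number of solutions of $x_1-x_2=x_3-x_4$ with $x_i\in X$. For $y$ in the group let $r_{A-A}(y)=|\{(a,b)\in A\times A:a-b=y\}|$ and $\mathsf{E}_3(A)=\sum_y r_{A-A}(y)^3$. $A\pm A=\{a\pm b: a,b\in A\}$. $\Delta(A)=\{(a,a):a\in A\}$, $A\times A+\Delta(A)=\{(a_1+a,a_2+a):a,a_1,a_2\in A\}$ and $A\times A-\Delta(A)=\{(a_1-a,a_2-a):a,a_1,a_2\in A\}$. *)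

From HB Require Import structures.
From mathcomp Require Import all_boot all_order all_algebra.
From mathcomp Require Import finmap.
Set Implicit Arguments. Unset Strict Implicit. Unset Printing Implicit Defensive.
Import Order.TTheory GRing.Theory Num.Theory.
Local Open Scope ring_scope.
Local Open Scope fset_scope.

Definition sumset (G : zmodType) (A B : {fset G}) : {fset G} :=
  [fset (x.1 + x.2)%R | x : G * G in A `*` B].
Definition diffset (G : zmodType) (A B : {fset G}) : {fset G} :=
  [fset (x.1 - x.2)%R | x : G * G in A `*` B].

Definition energy (G : zmodType) (X : {fset G}) : nat :=
  (\sum_(x1 <- X) \sum_(x2 <- X) \sum_(x3 <- X) \sum_(x4 <- X)
     ((x1 - x2 == x3 - x4)%R : nat))%N.

Definition rdiff (G : zmodType) (A : {fset G}) (y : G) : nat :=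
  (\sum_(a <- A) \sum_(b <- A) ((a - b == y)%R : nat))%N.

(* E_3(A) = sum_y r_{A-A}(y)^3; r vanishes outside A - A *)
Definition energy3 (G : zmodType) (A : {fset G}) : nat :=
  (\sum_(y <- diffset A A) rdiff A y ^ 3)%N.

Definition prod_plus_diag (G : zmodType) (A : {fset G}) : {fset G * G} :=
  [fset ((x.1.1 + x.2)%R, (x.1.2 + x.2)%R) | x : (G * G) * G in (A `*` A) `*` A].
Definition prod_minus_diag (G : zmodType) (A : {fset G}) : {fset G * G} :=
  [fset ((x.1.1 - x.2)%R, (x.1.2 - x.2)%R) | x : (G * G) * G in (A `*` A) `*` A].

From HB Require Import structures.
From mathcomp Require Import all_boot all_order all_algebra.
From mathcomp Require Import finmap.
From mathcomp Require Import zify ring.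
Import Order.TTheory GRing.Theory Num.Theory.
Set Implicit Arguments. Unset Strict Implicit. Unset Printing Implicit Defensive.

(* Every bound is a Cauchy-Schwarz count. A point (u, v) of P = A x A +- Delta(A)
   has u - v in A - A, and distinct points give distinct quadruples counted by the
   energy of A +- A, so |P|^2 <= |A - A| E(A +- A). Fixing one representation
   x - x' of each element of A - A (or x + x' of A + A) and translating it along
   the diagonal by a in A gives |A| |A - A| (resp. |A| |A + A|) distinct points
   of P. Finally the |A|^3 triples parametrising P collide exactly E_3(A) times,
   since (a1, a2, a) and (b1, b2, b) give the same point iff a1 - b1 = a2 - b2
   = +-(a - b); hence |A|^6 <= |P| E_3(A), which together with the first bound
   gives the last inequality. *)

Lemma count_sum (T : Type) (a : pred T) (s : seq T) : count a s = \sum_(x <- s) a x.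
Proof. by rewrite -sumn_count sumnE big_map. Qed.

Lemma sum_count_mem (T : eqType) (s r : seq T) (F : T -> nat) :
  uniq r -> {subset s <= r} ->
  \sum_(x <- r) count_mem x s * F x = \sum_(x <- s) F x.
Proof.
move=> r_uniq; elim: s => [|y s IHs] sub_r; first by rewrite big_nil big1 // => x _.
rewrite big_cons -IHs => [|x xs]; last by apply: sub_r; rewrite in_cons xs orbT.
under eq_bigr do rewrite /= mulnDl.
rewrite big_split /=; congr (_ + _).
rewrite (bigD1_seq y) ?sub_r ?mem_head //= eqxx mul1n big1 ?addn0 // => x.
by rewrite eq_sym => /negbTE ->.
Qed.

Lemma sqr_sum_leq (I : Type) (s : seq I) (f : I -> nat) :
  (\sum_(i <- s) f i) ^ 2 <= size s * \sum_(i <- s) f i ^ 2.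
Proof.
rewrite -(leq_pmul2l (isT : 0 < 2)) -mulnn big_distrl /=.
under eq_bigr do rewrite big_distrr /=.
have -> : 2 * (size s * \sum_(i <- s) f i ^ 2) =
          \sum_(i <- s) \sum_(j <- s) (f i ^ 2 + f j ^ 2).
  under [RHS]eq_bigr do rewrite big_split /= big_const_seq count_predT iter_addn_0.
  by rewrite big_split /= big_const_seq count_predT iter_addn_0 -big_distrl /=; lia.
rewrite big_distrr /=; apply: leq_sum => i _; rewrite big_distrr; apply: leq_sum => j _ /=.
by have [+ _] := nat_Cauchy (f i) (f j); lia.
Qed.

Lemma sqr_size_leq_collisions (T : eqType) (s r : seq T) :
  uniq r -> {subset s <= r} ->
  size s ^ 2 <= size r * \sum_(x <- s) count_mem x s.
Proof.
move=> r_uniq sub_r.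
have -> : size s = \sum_(x <- r) count_mem x s.
  by rewrite -sum1_size -(sum_count_mem (fun=> 1) r_uniq sub_r); under eq_bigr do rewrite muln1.
rewrite -(sum_count_mem (fun x => count_mem x s) r_uniq sub_r).
by under [X in _ * X]eq_bigr do rewrite mulnn; apply: sqr_sum_leq.
Qed.

Local Open Scope fset_scope.

Section FsetCounting.
Variables T T' U : choiceType.

Lemma big_fsetM (R : Type) (idx : R) (op : Monoid.com_law idx)
    (X : {fset T}) (Y : {fset T'}) (F : T * T' -> R) :
  \big[op/idx]_(p <- X `*` Y) F p = \big[op/idx]_(x <- X) \big[op/idx]_(y <- Y) F (x, y).
Proof. by rewrite big_imfset2 // => -[x y] [x' y'] _ _ /= [-> ->]. Qed.

Lemma card_fsetM (X : {fset T}) (Y : {fset T'}) : #|` X `*` Y| = #|` X| * #|` Y|.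
Proof.
rewrite -!sum1_size big_fsetM big_distrl /=; apply: eq_bigr => x _.
by rewrite mul1n sum1_size.
Qed.

Lemma leq_card_fsetM (X : {fset T}) (Y : {fset T'}) (Q : {fset U}) (f : T * T' -> U) :
  {in X `*` Y, forall p, f p \in Q} -> {in X `*` Y &, injective f} ->
  #|` X| * #|` Y| <= #|` Q|.
Proof.
move=> fQ f_inj.
have fXY_sub : [fset f p | p in X `*` Y] `<=` Q.
  by apply/fsubsetP => _ /imfsetP[p pXY ->]; apply: fQ.
by rewrite -card_fsetM (leq_trans _ (fsubset_leq_card fXY_sub)) // card_in_imfset.
Qed.

Lemma leq_sum_fsubset (X Y : {fset T}) (F : T -> nat) :
  X `<=` Y -> \sum_(x <- X) F x <= \sum_(x <- Y) F x.
Proof.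
move=> /fsubsetP XY.
exact: (uniq_sub_le_big leqnn (fun m n => leq_addr n m) _ _ (fset_uniq X) (fset_uniq Y) XY).
Qed.

Lemma sqr_card_leq_imfset_collisions (f : T -> U) (X : {fset T}) :
  #|` X| ^ 2 <= #|` [fset f x | x in X]| * \sum_(x <- X) \sum_(y <- X) (f x == f y).
Proof.
have := @sqr_size_leq_collisions _ [seq f x | x <- X] [fset f x | x in X].
rewrite size_map big_map; under eq_bigr do rewrite count_map count_sum.
rewrite exchange_big; apply => [|_ /mapP[x xX ->]]; first exact: fset_uniq.
exact: in_imfset.
Qed.

Lemma imfset_section (f : T -> U) (X : {fset T}) (x0 : T) :
  exists g : U -> T, {in [fset f x | x in X], forall y, g y \in X /\ f (g y) = y}.
Proof.
exists (fun y => head x0 [seq x <- X | f x == y]) => _ /imfsetP[x xX ->].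
set xs := [seq x' <- X | f x' == f x].
have x_xs : x \in xs by rewrite mem_filter eqxx.
have : head x0 xs \in xs by case: xs x_xs => [|z s] //= _; rewrite mem_head.
by rewrite mem_filter => /andP[/eqP ->].
Qed.

End FsetCounting.

Section AdditiveEnergy.
Variable G : zmodType.

Lemma sqr_card_leq_energy (X D : {fset G}) (Q : {fset G * G}) :
  Q `<=` X `*` X -> {in Q, forall p, (p.1 - p.2)%R \in D} ->
  #|` Q| ^ 2 <= #|` D| * energy X.
Proof.
move=> QXX QD; apply: leq_trans (sqr_card_leq_imfset_collisions (fun p => (p.1 - p.2)%R) Q) _.
apply: leq_mul.
  by apply/fsubset_leq_card/fsubsetP => _ /imfsetP[p pQ ->]; apply: QD.
apply: leq_trans (leq_sum_fsubset _ QXX) _.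
apply: (@leq_trans
  (\sum_(p <- X `*` X) \sum_(q <- X `*` X) ((p.1 - p.2)%R == (q.1 - q.2)%R : nat))).
  by apply: leq_sum => p _; apply: leq_sum_fsubset.
rewrite big_fsetM; apply/eq_leq/eq_bigr => x1 _; apply: eq_bigr => x2 _.
by rewrite big_fsetM.
Qed.

Lemma mem_sumset (A : {fset G}) a b : a \in A -> b \in A -> (a + b)%R \in sumset A A.
Proof. by move=> aA bA; apply/imfsetP; exists (a, b); rewrite // in_fsetM aA bA. Qed.

Lemma mem_diffset (A : {fset G}) a b : a \in A -> b \in A -> (a - b)%R \in diffset A A.
Proof. by move=> aA bA; apply/imfsetP; exists (a, b); rewrite // in_fsetM aA bA. Qed.

Lemma rdiffE (A : {fset G}) (y : G) :
  rdiff A y = count_mem y [seq (p.1 - p.2)%R | p <- A `*` A].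
Proof. by rewrite count_map count_sum big_fsetM. Qed.

Lemma sum_sub_rdiff (A : {fset G}) (F : G -> nat) :
  \sum_(a <- A) \sum_(b <- A) F (a - b)%R = \sum_(y <- diffset A A) rdiff A y * F y.
Proof.
under [RHS]eq_bigr do rewrite rdiffE.
rewrite sum_count_mem ?fset_uniq ?big_map ?big_fsetM // => _ /mapP[p pAA ->].
exact: in_imfset.
Qed.

Lemma energy3E (A : {fset G}) :
  energy3 A = \sum_(a <- A) \sum_(b <- A) rdiff A (a - b)%R ^ 2.
Proof.
rewrite (sum_sub_rdiff A (fun y => rdiff A y ^ 2)).
by apply: eq_bigr => y _; rewrite expnS.
Qed.

End AdditiveEnergy.

Section DiagonalShift.
Variables (G : zmodType) (A : {fset G}) (h : G -> G -> G).

Definition diag_shift : {fset G * G} :=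
  [fset (h x.1.1 x.2, h x.1.2 x.2) | x : (G * G) * G in (A `*` A) `*` A].

Lemma big_fsetM3 (F : (G * G) * G -> nat) :
  \sum_(x <- (A `*` A) `*` A) F x = \sum_(a <- A) \sum_(a1 <- A) \sum_(a2 <- A) F (a1, a2, a).
Proof. by rewrite big_fsetM exchange_big; apply: eq_bigr => a _; rewrite big_fsetM. Qed.

Hypothesis h_rdiff : forall a b,
  \sum_(x <- A) \sum_(y <- A) (h x a == h y b : nat) = rdiff A (a - b)%R.

Lemma diag_shift_collisions :
  \sum_(x <- (A `*` A) `*` A) \sum_(y <- (A `*` A) `*` A)
     ((h x.1.1 x.2, h x.1.2 x.2) == (h y.1.1 y.2, h y.1.2 y.2) : nat) = energy3 A.
Proof.
rewrite energy3E big_fsetM3; apply: eq_bigr => a _.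
transitivity (\sum_(b <- A) (\sum_(a1 <- A) \sum_(b1 <- A) (h a1 a == h b1 b : nat)) *
                            (\sum_(a2 <- A) \sum_(b2 <- A) (h a2 a == h b2 b : nat)));
  last by apply: eq_bigr => b _; rewrite !h_rdiff mulnn.
under eq_bigr do under eq_bigr do rewrite big_fsetM3 /=.
under eq_bigr do rewrite exchange_big; rewrite exchange_big; apply: eq_bigr => b _.
under eq_bigr do rewrite exchange_big; rewrite big_distrl; apply: eq_bigr => a1 _.
rewrite big_distrl; apply: eq_bigr => b1 _; rewrite big_distrr; apply: eq_bigr => a2 _.
by rewrite big_distrr; apply: eq_bigr => b2 _; rewrite xpair_eqE -mulnb.
Qed.

Lemma card_pow6_leq_diag_shift_energy3 : #|` A| ^ 6 <= #|` diag_shift| * energy3 A.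
Proof.
have := sqr_card_leq_imfset_collisions (fun x => (h x.1.1 x.2, h x.1.2 x.2)) ((A `*` A) `*` A).
by rewrite diag_shift_collisions !card_fsetM mulnn -expnSr -expnM.
Qed.

Hypothesis h_sub : forall u v a, (h u a - h v a)%R = (u - v)%R.
Hypothesis h_inj : forall u, injective (h u).

Lemma leq_card_diffset_diag_shift : #|` diffset A A| * #|` A| <= #|` diag_shift|.
Proof.
have [g gP] := imfset_section (fun p => (p.1 - p.2)%R) (A `*` A) (0, 0)%R.
apply: (leq_card_fsetM (f := fun q => (h (g q.1).1 q.2, h (g q.1).2 q.2))).
  move=> [y a]; rewrite in_fsetM => /andP[/gP[gyAA _] aA].
  by apply/imfsetP; exists (g y, a); rewrite // in_fsetM gyAA.
move=> [y1 a1] [y2 a2]; rewrite !in_fsetM => /andP[/gP[_ gy1] _] /andP[/gP[_ gy2] _] [E1 E2].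
rewrite /= in gy1 gy2 E1 E2.
have y12 : y1 = y2 by rewrite -gy1 -gy2 /= -(h_sub _ _ a1) E1 E2 h_sub.
by rewrite y12 in E1 *; rewrite (h_inj E1).
Qed.

Lemma sqr_card_diag_shift_leq_energy (B : {fset G}) :
  {in A &, forall x a, h x a \in B} -> #|` diag_shift| ^ 2 <= #|` diffset A A| * energy B.
Proof.
move=> hB; apply: (@sqr_card_leq_energy _ B (diffset A A)).
  apply/fsubsetP => p /imfsetP[[[x1 x2] a]]; rewrite !in_fsetM /= => /andP[/andP[x1A x2A] aA] ->.
  by rewrite !hB.
move=> p /imfsetP[[[x1 x2] a]]; rewrite !in_fsetM /= => /andP[/andP[x1A x2A] aA] ->.
by rewrite h_sub mem_diffset.
Qed.

End DiagonalShift.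

Section SumsAndDifferences.
Variables (G : zmodType) (A : {fset G}).

Lemma eq_addr_subr (x a y b : G) : (x + a == y + b)%R = (y - x == a - b)%R.
Proof.
rewrite -subr_eq0 -[RHS]subr_eq0 -oppr_eq0 opprB; congr (_ == 0)%R.
by rewrite opprD addrACA opprB addrC.
Qed.

Lemma eq_subr_subr (x a y b : G) : (x - a == y - b)%R = (x - y == a - b)%R.
Proof.
rewrite -subr_eq0 -[RHS]subr_eq0; congr (_ == 0)%R.
by rewrite !opprB addrACA [RHS]addrACA [(- y + _)%R]addrC.
Qed.

Lemma card_pow6_leq_prod_plus_diag_energy3 :
  #|` A| ^ 6 <= #|` prod_plus_diag A| * energy3 A.
Proof.
apply: card_pow6_leq_diag_shift_energy3 => a b.
rewrite /rdiff exchange_big; apply: eq_bigr => y _; apply: eq_bigr => x _.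
by rewrite (eq_addr_subr x a y b).
Qed.

Lemma card_pow6_leq_prod_minus_diag_energy3 :
  #|` A| ^ 6 <= #|` prod_minus_diag A| * energy3 A.
Proof.
apply: (card_pow6_leq_diag_shift_energy3 (h := fun a b => (a - b)%R)) => a b.
by apply: eq_bigr => x _; apply: eq_bigr => y _; rewrite (eq_subr_subr x a y b).
Qed.

Lemma leq_card_diffset_prod_plus_diag : #|` diffset A A| * #|` A| <= #|` prod_plus_diag A|.
Proof.
apply: leq_card_diffset_diag_shift => [u v a|u]; last exact: addrI.
by rewrite (addrC v) addrKA.
Qed.

Lemma leq_card_diffset_prod_minus_diag : #|` diffset A A| * #|` A| <= #|` prod_minus_diag A|.
Proof.
apply: (leq_card_diffset_diag_shift _ (h := fun a b => (a - b)%R)) => [u v a|u a1 a2].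
  by rewrite opprB addrA subrK.
by move/addrI/oppr_inj.
Qed.


Lemma leq_card_sumset_prod_plus_diag : #|` sumset A A| * #|` A| <= #|` prod_plus_diag A|.
Proof.
have [g gP] := imfset_section (fun p => (p.1 + p.2)%R) (A `*` A) (0, 0)%R.
apply: (leq_card_fsetM (f := fun q => (q.1, q.2 + (g q.1).2)%R)).
  move=> [y a]; rewrite in_fsetM => /andP[/gP[] /=]; rewrite in_fsetM => /andP[g1A g2A] gy aA.
  by apply/imfsetP; exists ((g y).1, a, (g y).2); rewrite ?gy // !in_fsetM /= g1A aA g2A.
by move=> [y1 a1] [y2 a2] _ _ [/= <- /addIr ->].
Qed.

Lemma diffset_gt0 : 0 < #|` A| -> 0 < #|` diffset A A|.
Proof.
rewrite !cardfs_gt0 => /fset0Pn[a aA].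
by apply/fset0Pn; exists (a - a)%R; rewrite mem_diffset.
Qed.

Lemma sqr_card_prod_plus_diag_leq_energy :
  #|` prod_plus_diag A| ^ 2 <= #|` diffset A A| * energy (sumset A A).
Proof.
apply: sqr_card_diag_shift_leq_energy => [u v a|x a xA aA]; first by rewrite (addrC v) addrKA.
exact: mem_sumset.
Qed.

Lemma sqr_card_prod_minus_diag_leq_energy :
  #|` prod_minus_diag A| ^ 2 <= #|` diffset A A| * energy (diffset A A).
Proof.
apply: (sqr_card_diag_shift_leq_energy (h := fun a b => (a - b)%R)) => [u v a|x a xA aA].
  by rewrite opprB addrA subrK.
exact: mem_diffset.
Qed.

End SumsAndDifferences.

Local Open Scope ring_scope.

Section RealBounds.
Variable R : realFieldType.
Implicit Types n m d p e t : R.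

Lemma invMsqr_le d p e : 0 <= d -> 0 <= e -> p ^+ 2 <= d * e -> d^-1 * p ^+ 2 <= e.
Proof.
rewrite le0r => /orP[/eqP -> e_ge0 _|d_gt0 _ pde]; first by rewrite invr0 mul0r.
by rewrite ler_pdivrMl.
Qed.

Lemma sqrM_le_invMsqr n d m p : 0 < d -> 0 <= n -> 0 <= m ->
  d * n <= p -> m * n <= p -> n ^+ 2 * m <= d^-1 * p ^+ 2.
Proof.
move=> d_gt0 n_ge0 m_ge0 ndp nmp; rewrite ler_pdivlMl //.
have -> : d * (n ^+ 2 * m) = (d * n) * (m * n) by ring.
by rewrite expr2 ler_pM ?mulr_ge0 // ltW.
Qed.

Lemma expr12_div_le n t d p e : 0 <= t -> 0 <= d -> 0 <= e ->
  n ^+ 6 <= p * t -> p ^+ 2 <= d * e -> n ^+ 12 / (t ^+ 2 * d) <= e.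
Proof.
move=> t_ge0 d_ge0 e_ge0 npt pde.
have [->|td_gt0] := eqVneq (t ^+ 2 * d) 0; first by rewrite invr0 mulr0.
have {td_gt0} td_gt0 : 0 < t ^+ 2 * d by rewrite lt0r td_gt0 mulr_ge0 ?exprn_ge0.
rewrite ler_pdivrMr //.
have n6_ge0 : 0 <= n ^+ 6 by rewrite (exprM n 3 2) sqr_ge0.
have : (n ^+ 6) ^+ 2 <= (p * t) ^+ 2 by rewrite ler_pXn2r // ?nnegrE // (le_trans n6_ge0).
rewrite -exprM exprMn => /le_trans; apply.
have -> : e * (t ^+ 2 * d) = d * e * t ^+ 2 by ring.
by rewrite ler_wpM2r ?exprn_ge0.
Qed.
End RealBounds.

Theorem corollary5p6 (G : zmodType) (A : {fset G}) :
  let nA : rat := (#|` A|)%:R in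
  let nD : rat := (#|` diffset A A|)%:R in
  let nS : rat := (#|` sumset A A|)%:R in
  ((energy (sumset A A))%:R >= nD^-1 * (#|` prod_plus_diag A|)%:R ^+ 2 /\
      nD^-1 * (#|` prod_plus_diag A|)%:R ^+ 2 >= nA ^+ 2 * Num.max nD nS) /\
  (
      (energy (diffset A A))%:R >= nD^-1 * (#|` prod_minus_diag A|)%:R ^+ 2 /\
      nD^-1 * (#|` prod_minus_diag A|)%:R ^+ 2 >= nA ^+ 2 * nD) /\
  (
      (energy (sumset A A))%:R >= nA ^+ 12 / ((energy3 A)%:R ^+ 2 * nD) /\
      (energy (diffset A A))%:R >= nA ^+ 12 / ((energy3 A)%:R ^+ 2 * nD)).
Proof.
move=> nA nD nS.
have natr_le m n : (m <= n)%N -> (m%:R <= n%:R :> rat) by rewrite ler_nat.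
have energyP := natr_le _ _ (sqr_card_prod_plus_diag_leq_energy A).
have energyM := natr_le _ _ (sqr_card_prod_minus_diag_leq_energy A).
have diffP := natr_le _ _ (leq_card_diffset_prod_plus_diag A).
have sumP := natr_le _ _ (leq_card_sumset_prod_plus_diag A).
have diffM := natr_le _ _ (leq_card_diffset_prod_minus_diag A).
have energy3P := natr_le _ _ (card_pow6_leq_prod_plus_diag_energy3 A).
have energy3M := natr_le _ _ (card_pow6_leq_prod_minus_diag_energy3 A).
rewrite ?natrM ?natrX in energyP energyM diffP sumP diffM energy3P energy3M.
have sqr_bound m p : 0 <= m -> nD * nA <= p -> m * nA <= p -> nA ^+ 2 * m <= nD^-1 * p ^+ 2.
  have [A0 | A_gt0] := posnP #|` A|.
    by move=> *; rewrite /nA A0 expr0n mul0r mulr_ge0 ?invr_ge0 ?sqr_ge0.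
  by apply: sqrM_le_invMsqr; rewrite ?ltr0n ?diffset_gt0.
split; [split | split; [split | split]].
- by apply: invMsqr_le.
- by apply: sqr_bound; rewrite ?le_max ?ler0n // maxr_pMl // ge_max diffP sumP.
- by apply: invMsqr_le.
- exact: sqr_bound.
- exact: expr12_div_le energy3P energyP.
- exact: expr12_div_le energy3M energyM.
Qed.
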